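(* Let $b>0$ and consider the Born–Infeld Lagrangian $L(F,G)=\sqrt{b^4+\tfrac12 b^2F-\tfrac1{16}G^2}-b^2$ on the region where $b^4+\tfrac12b^2F-\tfrac1{16}G^2>0$. Then (i) the quantities $\Omega_1,\Omega_2,\Omega_3$ (formed from $L_F,L_{FF},L_{FG},L_{GG},F,G$ as below) vanish identically on this region; and (ii) for any antisymmetric background $F_{\mu\nu}$ in this region, antisymmetric $f_{\mu\nu}$ and covector $k_\lambda$ satisfying (C) $f_{\mu\nu}k_\lambda+f_{\nu\lambda}k_\mu+f_{\lambda\mu}k_\nu=0$ and (E) $L_F f^{\mu\nu}k_\nu+A F^{\mu\nu}k_\nu+B\tilde F^{\mu\nu}k_\nu=0$ with $A\neq0$, one has $$\Big[\big(b^2+\tfrac12F\big)\eta^{\mu\nu}+F^{\mu}{}_{\lambda}F^{\lambda\nu}\Big]k_\mu k_\nu=0.$$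
   Context: Minkowski metric $\eta_{\mu\nu}=\mathrm{diag}(1,-1,-1,-1)$, indices raised/lowered with $\eta$. $F=F^{\mu\nu}F_{\mu\nu}$, $G=F^{\mu\nu}\tilde F_{\mu\nu}$, with dual $\tilde F_{\alpha\beta}=\tfrac12\eta_{\alpha\beta}{}^{\mu\nu}F_{\mu\nu}$ (Levi-Civita tensor), so that $\tilde F_{\mu\nu}F^{\nu\lambda}=-\tfrac14G\delta_\mu^\lambda$ and $\tilde F_{\mu\lambda}\tilde F^{\lambda\nu}-F_{\mu\lambda}F^{\lambda\nu}=\tfrac12F\delta_\mu^\nu$. Subscripts denote partial derivatives of $L$ evaluated at $(F,G)$. $\xi=F^{\alpha\beta}f_{\alpha\beta}$, $\zeta=\tilde F^{\alpha\beta}f_{\alpha\beta}$, $A=2(\xi L_{FF}+\zeta L_{FG})$, $B=2(\xi L_{FG}+\zeta L_{GG})$. $\Omega_1=-L_FL_{FG}+2FL_{FG}L_{GG}+G(L_{GG}^2-L_{FG}^2)$, $\Omega_2=(L_F+2GL_{FG})(L_{GG}-L_{FF})+2F(L_{FF}L_{GG}+L_{FG}^2)$, $\Omega_3=L_FL_{FG}+2FL_{FF}L_{FG}+G(L_{FG}^2-L_{FF}^2)$. *)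

From Stdlib Require Import Reals Lra.
From Coquelicot Require Import Coquelicot.
Open Scope R_scope.

Definition BIrad (b x y : R) : R := b ^ 4 + / 2 * b ^ 2 * x - / 16 * y ^ 2.

Definition LBI (b x y : R) : R := sqrt (BIrad b x y) - b ^ 2.

Definition L_F (b x y : R) : R := Derive (fun x' => LBI b x' y) x.
Definition L_FF (b x y : R) : R := Derive (fun x' => L_F b x' y) x.
Definition L_FG (b x y : R) : R := Derive (fun y' => L_F b x y') y.
Definition L_GG (b x y : R) : R :=
  Derive (fun y' => Derive (fun y'' => LBI b x y'') y') y.

Definition Omega1 (b x y : R) : R :=
  - L_F b x y * L_FG b x y + 2 * x * L_FG b x y * L_GG b x y
  + y * (L_GG b x y ^ 2 - L_FG b x y ^ 2).
Definition Omega2 (b x y : R) : R :=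
  (L_F b x y + 2 * y * L_FG b x y) * (L_GG b x y - L_FF b x y)
  + 2 * x * (L_FF b x y * L_GG b x y + L_FG b x y ^ 2).
Definition Omega3 (b x y : R) : R :=
  L_F b x y * L_FG b x y + 2 * x * L_FF b x y * L_FG b x y
  + y * (L_FG b x y ^ 2 - L_FF b x y ^ 2).

Definition sum4 (g : nat -> R) : R := g 0%nat + g 1%nat + g 2%nat + g 3%nat.

(* diagonal Minkowski metric eta = diag(1,-1,-1,-1) (equal to its inverse) *)
Definition eta (m : nat) : R := if Nat.eqb m 0 then 1 else -1.
Definition etaM (m n : nat) : R := if Nat.eqb m n then eta m else 0.

(* a rank-2 tensor is given by its covariant components T_{mu nu} *)
Definition tensor2 := nat -> nat -> R.

(* raising both indices: T^{mu nu} = eta^{mu a} eta^{nu b} T_{a b} *)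
Definition up2 (T : tensor2) : tensor2 := fun m n => eta m * eta n * T m n.

(* Levi-Civita symbol with lower indices, eps_{0123} = +1 (the sign
   convention is irrelevant for the statement);
   for indices in 0..3 this is the sign of the permutation, 0 if repeated. *)
Definition eps (a b c d : nat) : R :=
  (INR b - INR a) * (INR c - INR a) * (INR d - INR a)
  * (INR c - INR b) * (INR d - INR b) * (INR d - INR c) / 12.

Definition dual (T : tensor2) : tensor2 :=
  fun a b => / 2 * sum4 (fun r => sum4 (fun s => eps a b r s * up2 T r s)).

Definition invF (T : tensor2) : R :=
  sum4 (fun m => sum4 (fun n => up2 T m n * T m n)).
Definition invG (T : tensor2) : R :=
  sum4 (fun m => sum4 (fun n => up2 T m n * dual T m n)).

Definition antisym (T : tensor2) : Prop :=
  forall m n, (m < 4)%nat -> (n < 4)%nat -> T m n = - T n m.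

From Stdlib Require Import Reals Lra Lia.
From Coquelicot Require Import Coquelicot.
Open Scope R_scope.

(* With s = sqrt(b^4 + b^2 F/2 - G^2/16), the Born-Infeld partials are
   L_F = b^2/(4s), L_FF = -b^4/(16 s^3), L_FG = b^2 G/(64 s^3) and
   L_GG = -1/(16 s) - G^2/(256 s^3); once F is eliminated in favour of s, the
   Omegas and the identity L_F xi/2 + B G/4 = -(b^2 + F/2) A are identities of
   rational functions.  For (ii), contract (E) with u^mu = F^{mu nu} k_nu: by the
   cyclic condition (C) the f-term becomes xi k^2/2, and by
   Ftilde_{mu nu} F^{nu lambda} = -G/4 delta the dual term becomes G k^2/4, so
   (E) reduces to A ((b^2 + F/2) k^2 - u.u) = 0, and the bracket is the
   quadratic form of the conclusion. *)

Lemma locally_pos_of_continuous (g : R -> R) (x : R) :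
  continuous g x -> 0 < g x -> locally x (fun t => 0 < g t).
Proof. intros Hc Hpos; exact (Hc _ (open_gt 0 _ Hpos)). Qed.

Lemma is_derive_inv_sqrt (g : R -> R) (x dg : R) :
  is_derive g x dg -> 0 < g x ->
  is_derive (fun t => / sqrt (g t)) x (- dg / (2 * sqrt (g x) ^ 3)).
Proof.
  intros Hg Hpos.
  assert (Hs : 0 < sqrt (g x)) by (apply sqrt_lt_R0; exact Hpos).
  replace (- dg / (2 * sqrt (g x) ^ 3))
    with (- (dg / (2 * sqrt (g x))) / sqrt (g x) ^ 2) by (field; lra).
  apply (is_derive_inv (fun t => sqrt (g t)));
    [exact (is_derive_sqrt g x dg Hg Hpos) | lra].
Qed.

Lemma is_derive_sqrt_sub_const (g : R -> R) (x dg c : R) :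
  is_derive g x dg -> 0 < g x ->
  is_derive (fun t => sqrt (g t) - c) x (dg / (2 * sqrt (g x))).
Proof.
  intros Hg Hpos.
  pose proof (is_derive_minus (V := R_NormedModule) _ (fun _ => c) x _ _
    (is_derive_sqrt g x dg Hg Hpos) (is_derive_const c x)) as H.
  replace (dg / (2 * sqrt (g x))) with (minus (dg / (2 * sqrt (g x))) 0)
    by (unfold minus, plus, opp; simpl; ring).
  exact H.
Qed.

Lemma is_derive_BIrad_F (b x y : R) : is_derive (fun t => BIrad b t y) x (b ^ 2 / 2).
Proof. unfold BIrad; auto_derive; [easy | field]. Qed.

Lemma is_derive_BIrad_G (b x y : R) : is_derive (fun t => BIrad b x t) y (- y / 8).
Proof. unfold BIrad; auto_derive; [easy | field]. Qed.

Lemma BIrad_pos_near_F (b x y : R) :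
  0 < BIrad b x y -> locally x (fun t => 0 < BIrad b t y).
Proof.
  apply (locally_pos_of_continuous (fun t => BIrad b t y)).
  apply (@ex_derive_continuous R_AbsRing R_NormedModule).
  eexists; apply is_derive_BIrad_F.
Qed.

Lemma BIrad_pos_near_G (b x y : R) :
  0 < BIrad b x y -> locally y (fun t => 0 < BIrad b x t).
Proof.
  apply (locally_pos_of_continuous (fun t => BIrad b x t)).
  apply (@ex_derive_continuous R_AbsRing R_NormedModule).
  eexists; apply is_derive_BIrad_G.
Qed.

Lemma sqrt_BIrad_neq0 (b x y : R) : 0 < BIrad b x y -> sqrt (BIrad b x y) <> 0.
Proof. intros H; apply Rgt_not_eq, sqrt_lt_R0, H. Qed.

Lemma L_F_eq (b x y : R) :
  0 < BIrad b x y -> L_F b x y = b ^ 2 / (4 * sqrt (BIrad b x y)).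
Proof.
  intros H; apply is_derive_unique; unfold LBI.
  replace (b ^ 2 / (4 * sqrt (BIrad b x y)))
    with (b ^ 2 / 2 / (2 * sqrt (BIrad b x y)))
    by (field; apply sqrt_BIrad_neq0, H).
  exact (is_derive_sqrt_sub_const _ x _ _ (is_derive_BIrad_F b x y) H).
Qed.

Lemma L_G_eq (b x y : R) :
  0 < BIrad b x y ->
  Derive (fun t => LBI b x t) y = - y / (16 * sqrt (BIrad b x y)).
Proof.
  intros H; apply is_derive_unique; unfold LBI.
  replace (- y / (16 * sqrt (BIrad b x y)))
    with (- y / 8 / (2 * sqrt (BIrad b x y)))
    by (field; apply sqrt_BIrad_neq0, H).
  exact (is_derive_sqrt_sub_const _ y _ _ (is_derive_BIrad_G b x y) H).
Qed.

Lemma L_F_near_F (b x y : R) :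
  0 < BIrad b x y ->
  locally x (fun t => L_F b t y = b ^ 2 / 4 * / sqrt (BIrad b t y)).
Proof.
  intros H; eapply filter_imp; [| exact (BIrad_pos_near_F b x y H)].
  intros t Ht; rewrite L_F_eq by exact Ht; field; apply sqrt_BIrad_neq0, Ht.
Qed.

Lemma L_F_near_G (b x y : R) :
  0 < BIrad b x y ->
  locally y (fun t => L_F b x t = b ^ 2 / 4 * / sqrt (BIrad b x t)).
Proof.
  intros H; eapply filter_imp; [| exact (BIrad_pos_near_G b x y H)].
  intros t Ht; rewrite L_F_eq by exact Ht; field; apply sqrt_BIrad_neq0, Ht.
Qed.

Lemma L_FF_eq (b x y : R) :
  0 < BIrad b x y -> L_FF b x y = - b ^ 4 / (16 * sqrt (BIrad b x y) ^ 3).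
Proof.
  intros H; unfold L_FF.
  rewrite (Derive_ext_loc _ (fun t => b ^ 2 / 4 * / sqrt (BIrad b t y)))
    by exact (L_F_near_F b x y H).
  apply is_derive_unique.
  replace (- b ^ 4 / (16 * sqrt (BIrad b x y) ^ 3))
    with (b ^ 2 / 4 * (- (b ^ 2 / 2) / (2 * sqrt (BIrad b x y) ^ 3)))
    by (field; apply sqrt_BIrad_neq0, H).
  apply is_derive_scal, (is_derive_inv_sqrt (fun t => BIrad b t y));
    [apply is_derive_BIrad_F | exact H].
Qed.

Lemma L_FG_eq (b x y : R) :
  0 < BIrad b x y -> L_FG b x y = b ^ 2 * y / (64 * sqrt (BIrad b x y) ^ 3).
Proof.
  intros H; unfold L_FG.
  rewrite (Derive_ext_loc _ (fun t => b ^ 2 / 4 * / sqrt (BIrad b x t)))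
    by exact (L_F_near_G b x y H).
  apply is_derive_unique.
  replace (b ^ 2 * y / (64 * sqrt (BIrad b x y) ^ 3))
    with (b ^ 2 / 4 * (- (- y / 8) / (2 * sqrt (BIrad b x y) ^ 3)))
    by (field; apply sqrt_BIrad_neq0, H).
  apply is_derive_scal, (is_derive_inv_sqrt (fun t => BIrad b x t));
    [apply is_derive_BIrad_G | exact H].
Qed.

Lemma L_GG_eq (b x y : R) :
  0 < BIrad b x y ->
  L_GG b x y = - / (16 * sqrt (BIrad b x y)) - y ^ 2 / (256 * sqrt (BIrad b x y) ^ 3).
Proof.
  intros H; unfold L_GG.
  rewrite (Derive_ext_loc _ (fun t => - t / 16 * / sqrt (BIrad b x t))).
  2:{ eapply filter_imp; [| exact (BIrad_pos_near_G b x y H)].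
      intros t Ht; rewrite L_G_eq by exact Ht; field; apply sqrt_BIrad_neq0, Ht. }
  apply is_derive_unique.
  replace (- / (16 * sqrt (BIrad b x y)) - y ^ 2 / (256 * sqrt (BIrad b x y) ^ 3))
    with (- / 16 * / sqrt (BIrad b x y)
          + - y / 16 * (- (- y / 8) / (2 * sqrt (BIrad b x y) ^ 3)))
    by (field; apply sqrt_BIrad_neq0, H).
  apply (Derive.is_derive_mult (fun t => - t / 16) (fun t => / sqrt (BIrad b x t))).
  - auto_derive; [easy | field].
  - apply (is_derive_inv_sqrt (fun t => BIrad b x t));
      [apply is_derive_BIrad_G | exact H].
Qed.

Lemma BIrad_pos_neq0 (b x y : R) : 0 < BIrad b x y -> b <> 0.
Proof. intros H ->; unfold BIrad in H; nra. Qed.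

Lemma BI_partials (b x y : R) :
  0 < BIrad b x y ->
  exists s, 0 < s /\ b <> 0 /\ x = 2 * (s ^ 2 - b ^ 4 + y ^ 2 / 16) / b ^ 2 /\
    L_F b x y = b ^ 2 / (4 * s) /\ L_FF b x y = - b ^ 4 / (16 * s ^ 3) /\
    L_FG b x y = b ^ 2 * y / (64 * s ^ 3) /\
    L_GG b x y = - / (16 * s) - y ^ 2 / (256 * s ^ 3).
Proof.
  intros H; exists (sqrt (BIrad b x y)).
  pose proof (BIrad_pos_neq0 b x y H) as Hb.
  pose proof (sqrt_sqrt _ (Rlt_le _ _ H)) as Hs2.
  repeat split.
  - apply sqrt_lt_R0, H.
  - exact Hb.
  - replace (sqrt (BIrad b x y) ^ 2) with (BIrad b x y) by (simpl; lra).
    unfold BIrad; field; exact Hb.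
  - apply L_F_eq, H.
  - apply L_FF_eq, H.
  - apply L_FG_eq, H.
  - apply L_GG_eq, H.
Qed.

Lemma BI_Omegas_vanish (b x y : R) :
  0 < BIrad b x y -> Omega1 b x y = 0 /\ Omega2 b x y = 0 /\ Omega3 b x y = 0.
Proof.
  intros H; unfold Omega1, Omega2, Omega3.
  destruct (BI_partials b x y H) as (s & Hs & Hb & Hx & -> & -> & -> & ->).
  subst x; repeat split; field; lra.
Qed.

Lemma BI_dispersion_identity (b x y xi zeta : R) :
  0 < BIrad b x y ->
  L_F b x y * xi / 2 + 2 * (xi * L_FG b x y + zeta * L_GG b x y) * y / 4
  = - (b ^ 2 + / 2 * x) * (2 * (xi * L_FF b x y + zeta * L_FG b x y)).
Proof.
  intros H; destruct (BI_partials b x y H) as (s & Hs & Hb & Hx & -> & -> & -> & ->).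
  subst x; field; lra.
Qed.

Definition contr (T : tensor2) (k : nat -> R) : nat -> R :=
  fun m => sum4 (fun n => up2 T m n * k n).
Definition mdot (u v : nat -> R) : R := sum4 (fun m => eta m * u m * v m).
Definition tpair (T S : tensor2) : R :=
  sum4 (fun a => sum4 (fun c => up2 T a c * S a c)).

Lemma antisym_diag (T : tensor2) (m : nat) : antisym T -> (m < 4)%nat -> T m m = 0.
Proof. intros H Hm; pose proof (H m m Hm Hm); lra. Qed.

Ltac antisym_canon H :=
  rewrite ?(antisym_diag _ 0 H), ?(antisym_diag _ 1 H), ?(antisym_diag _ 2 H),
    ?(antisym_diag _ 3 H) by lia;
  rewrite ?(H 1%nat 0%nat), ?(H 2%nat 0%nat), ?(H 3%nat 0%nat), ?(H 2%nat 1%nat),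
    ?(H 3%nat 1%nat), ?(H 3%nat 2%nat) by lia.

Ltac expand_tensors :=
  unfold contr, mdot, tpair, invG, dual, eps, up2, etaM, eta, sum4;
  cbn [Nat.eqb INR].

Lemma mdot_contr_dual (T : tensor2) (k : nat -> R) :
  antisym T -> mdot (contr (dual T) k) (contr T k) = invG T * mdot k k / 4.
Proof. intros H; expand_tensors; antisym_canon H; field. Qed.

Definition cyclic_sum_vanishes (f : tensor2) (k : nat -> R) : Prop :=
  forall m n l, (m < 4)%nat -> (n < 4)%nat -> (l < 4)%nat ->
    f m n * k l + f n l * k m + f l m * k n = 0.

Lemma sum4_eq0 (g : nat -> R) : (forall i, (i < 4)%nat -> g i = 0) -> sum4 g = 0.
Proof. intros H; unfold sum4; rewrite !H by lia; ring. Qed.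

Lemma mdot_contr_cyclic (T f : tensor2) (k : nat -> R) :
  antisym T -> antisym f -> cyclic_sum_vanishes f k ->
  mdot (contr T k) (contr f k) = tpair T f * mdot k k / 2.
Proof.
  intros HT Hf Hc.
  assert (Hsum : sum4 (fun l => sum4 (fun m => sum4 (fun n =>
    eta l * k l * up2 T m n * (f m n * k l + f n l * k m + f l m * k n)))) = 0).
  { apply sum4_eq0; intros l Hl; apply sum4_eq0; intros m Hm;
      apply sum4_eq0; intros n Hn.
    rewrite Hc by assumption; ring. }
  revert Hsum; expand_tensors; antisym_canon HT; antisym_canon Hf; lra.
Qed.

Lemma quadratic_form_eq (T : tensor2) (k : nat -> R) (c : R) :
  antisym T ->
  sum4 (fun m => sum4 (fun n =>
    (c * etaM m n + sum4 (fun l => up2 T m l * eta l * up2 T l n)) * k m * k n))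
  = c * mdot k k - mdot (contr T k) (contr T k).
Proof. intros H; expand_tensors; antisym_canon H; ring. Qed.

Lemma contracted_field_eq (T f : tensor2) (k : nat -> R) (c A B : R) :
  antisym T -> antisym f -> cyclic_sum_vanishes f k ->
  (forall m, (m < 4)%nat ->
     c * contr f k m + A * contr T k m + B * contr (dual T) k m = 0) ->
  c * (tpair T f * mdot k k / 2) + A * mdot (contr T k) (contr T k)
  + B * (invG T * mdot k k / 4) = 0.
Proof.
  intros HT Hf Hc HE.
  rewrite <- mdot_contr_cyclic, <- mdot_contr_dual by assumption.
  transitivity (mdot (contr T k)
    (fun m => c * contr f k m + A * contr T k m + B * contr (dual T) k m)).
  - unfold mdot, sum4; ring.
  - unfold mdot; apply sum4_eq0; intros m Hm; rewrite HE by exact Hm; ring.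
Qed.

Theorem mainTheorem4 (b : R) (hb : 0 < b) :
  (forall x y : R, 0 < BIrad b x y ->
     Omega1 b x y = 0 /\ Omega2 b x y = 0 /\ Omega3 b x y = 0)
  /\
  (forall (Fb f : tensor2) (k : nat -> R),
     antisym Fb -> antisym f ->
     0 < BIrad b (invF Fb) (invG Fb) ->
     let x := invF Fb in
     let y := invG Fb in
     let xi := sum4 (fun a => sum4 (fun c => up2 Fb a c * f a c)) in
     let zeta := sum4 (fun a => sum4 (fun c => up2 (dual Fb) a c * f a c)) in
     let A := 2 * (xi * L_FF b x y + zeta * L_FG b x y) in
     let B := 2 * (xi * L_FG b x y + zeta * L_GG b x y) in
     (forall m n l, (m < 4)%nat -> (n < 4)%nat -> (l < 4)%nat ->
        f m n * k l + f n l * k m + f l m * k n = 0) ->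
     (forall m, (m < 4)%nat ->
        L_F b x y * sum4 (fun n => up2 f m n * k n)
        + A * sum4 (fun n => up2 Fb m n * k n)
        + B * sum4 (fun n => up2 (dual Fb) m n * k n) = 0) ->
     A <> 0 ->
     sum4 (fun m => sum4 (fun n =>
        ((b ^ 2 + / 2 * x) * etaM m n
         + sum4 (fun l => up2 Fb m l * eta l * up2 Fb l n)) * k m * k n)) = 0).
Proof.
  split; [exact (BI_Omegas_vanish b) |].
  intros Fb f k HF Hf Hrad x y xi zeta A B HC HE HA.
  rewrite quadratic_form_eq by exact HF.
  pose proof (contracted_field_eq Fb f k _ A B HF Hf HC HE) as Hcontr.
  pose proof (BI_dispersion_identity b x y xi zeta Hrad) as Hdisp.
  change (tpair Fb f) with xi in Hcontr; change (invG Fb) with y in Hcontr.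
  fold A B in Hdisp.
  set (K := mdot k k) in *; set (P := mdot (contr Fb k) (contr Fb k)) in *.
  assert (Hfactor : A * (P - (b ^ 2 + / 2 * x) * K)
                    = L_F b x y * (xi * K / 2) + A * P + B * (y * K / 4)).
  { replace (A * (P - (b ^ 2 + / 2 * x) * K))
      with (K * (- (b ^ 2 + / 2 * x) * A) + A * P) by ring.
    rewrite <- Hdisp; field. }
  rewrite Hcontr in Hfactor.
  destruct (Rmult_integral _ _ Hfactor); [contradiction | lra].
Qed.
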